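(* Let $K=2$ and let $(X_{t,1},X_{t,2})$ have joint density $p_{\mathcal{X}}$ on $\mathbb{R}^{2d}$ satisfying the relaxed symmetry condition with constant $\nu$. Then for every fixed vector $\beta\in\mathbb{R}^d$, $$\sum_{i=1}^2\mathbb{E}_{\mathcal{X}_t}\Big[X_{t,i}X_{t,i}^\top\mathbb{1}\{X_{t,i}=\arg\max_{X\in\mathcal{X}_t}X^\top\beta\}\Big]\succcurlyeq\nu^{-1}\Sigma,$$ where $\Sigma=\frac12\mathbb{E}[X_{t,1}X_{t,1}^\top+X_{t,2}X_{t,2}^\top]$.
   Context: $\mathcal{X}_t=\{X_{t,1},X_{t,2}\}\subset\mathbb{R}^d$, features bounded ($\|X_{t,i}\|_2\le x_{\max}$). Relaxed symmetry: there is $\nu<\infty$ with $p_{\mathcal{X}}(-\mathbf{x})/p_{\mathcal{X}}(\mathbf{x})\le\nu$ for all $\mathbf{x}\in\mathbb{R}^{2d}$. $\succcurlyeq$ is the Loewner (positive semidefinite) order. *)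

From HB Require Import structures.
From mathcomp Require Import all_boot all_order all_algebra.
From mathcomp Require Import all_classical all_reals all_analysis.
Set Implicit Arguments. Unset Strict Implicit. Unset Printing Implicit Defensive.
Import Order.TTheory GRing.Theory Num.Theory.
Local Open Scope ring_scope.

Section Defs.
Variable R : realType.

(* Lebesgue integral over R^n (points = n-tuples), written as the iterated
   one-dimensional Lebesgue integral (Fubini/Tonelli). *)
Fixpoint tint (n : nat) : (n.-tuple R -> \bar R) -> \bar R :=
  match n return (n.-tuple R -> \bar R) -> \bar R with
  | 0 => fun f => f [tuple]
  | m.+1 => fun f =>
      (\int[@lebesgue_measure R]_x tint (fun t : m.-tuple R => f [tuple of x :: t]))%E
  end.

Definition int2 (d : nat) (g : d.-tuple R * d.-tuple R -> \bar R) : \bar R :=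
  tint (fun x1 => tint (fun x2 => g (x1, x2))).

Definition Ep (d : nat) (p : d.-tuple R * d.-tuple R -> R)
  (g : d.-tuple R * d.-tuple R -> R) : R :=
  fine (int2 (fun z => (g z * p z)%:E)).

Definition dotv (d : nat) (x y : d.-tuple R) : R := \sum_(j < d) tnth x j * tnth y j.
Definition normv (d : nat) (x : d.-tuple R) : R := Num.sqrt (dotv x x).
Definition negv (d : nat) (x : d.-tuple R) : d.-tuple R := map_tuple (fun a => - a) x.

Definition psd (d : nat) (A : 'M[R]_d) : Prop :=
  forall v : 'cV[R]_d, 0 <= (v^T *m A *m v) 0 0.
Definition loewner_ge (d : nat) (A B : 'M[R]_d) : Prop := psd (A - B).

End Defs.

(* Fix v and write q_i(z) = (v^T X_i)^2, so that
   v^T M v = E[q_1 1{X_1 wins}] + E[q_2 1{X_2 wins}] and v^T Sigma v = (E[q_1] + E[q_2]) / 2.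
   The reflection z |-> -z leaves q_i unchanged and maps the event {X_1 wins} onto
   {X_2 wins}; by the relaxed symmetry p(-z) <= nu p(z), each of A = E[q_1 1{X_1 wins}] and
   B = E[q_1 1{X_2 wins}] is at most nu times the other.  As the two events cover the sample
   space, E[q_1] <= A + B <= (1 + nu) A; and either nu >= 1 or A = B = 0, so in both cases
   E[q_1] <= 2 nu A.  The same holds for q_2, whence v^T M v >= nu^-1 v^T Sigma v. *)

From HB Require Import structures.
From mathcomp Require Import all_boot all_order all_algebra.
From mathcomp Require Import all_classical all_reals all_analysis.
From mathcomp Require Import measurable_realfun.
From mathcomp Require Import ring lra.
Import Order.TTheory GRing.Theory Num.Theory.
Set Implicit Arguments. Unset Strict Implicit. Unset Printing Implicit Defensive.
Local Open Scope ring_scope.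
Section iterated_integral.
Variable R : realType.
Local Notation mu := (@lebesgue_measure R).
Implicit Types (n : nat).

Lemma tint_ge0 n (f : n.-tuple R -> \bar R) :
  (forall t, 0 <= f t)%E -> (0 <= tint f)%E.
Proof.
elim: n f => [|n IH] f f0 //=.
by apply: integral_ge0 => x _; apply: IH.
Qed.

Lemma tint0 n : tint (fun _ : n.-tuple R => 0%E) = 0%E.
Proof.
elim: n => [|n IH] //=.
by under eq_integral do rewrite IH; exact: integral0.
Qed.

Lemma measurable_tint n d (T : measurableType d) (F : T * n.-tuple R -> R) :
  measurable_fun setT F ->
  measurable_fun setT (fun x => tint (fun t => (F (x, t))%:E)).
Proof.
elim: n d T F => [|n IH] d T F mF /=.
  by apply/measurable_EFinP; apply: (measurableT_comp mF); exact: measurable_fun_pair.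
pose G (xy : T * R) := tint (fun t : n.-tuple R => (F (xy.1, [tuple of xy.2 :: t]))%:E).
have mG : measurable_fun setT G.
  apply: (IH _ _ (fun z => F (z.1.1, [tuple of z.1.2 :: z.2]))).
  apply: (measurableT_comp mF); apply: measurable_fun_pair => /=.
    exact: (measurableT_comp measurable_fst measurable_fst).
  by apply: measurable_cons => //; exact: (measurableT_comp measurable_snd measurable_fst).
have msection (H : T * R -> \bar R) : measurable_fun setT H -> (forall z, 0 <= H z)%E ->
    measurable_fun setT (fun x => \int[mu]_y H (x, y))%E.
  by move=> mH H0; exact: (measurable_fun_fubini_tonelli_F (m2 := mu) H mH H0).
rewrite (_ : (fun x => _) = fun x => \int[mu]_y G (x, y))%E //.
under eq_fun do rewrite integralE.
apply: emeasurable_funB.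
- rewrite (_ : (fun x => _) = fun x => \int[mu]_y G^\+ (x, y))%E.
    by apply: msection; [exact: measurable_funepos | exact: funepos_ge0].
  by apply/funext => x; apply: eq_integral => y _; rewrite !funeposE.
- rewrite (_ : (fun x => _) = fun x => \int[mu]_y G^\- (x, y))%E.
    by apply: msection; [exact: measurable_funeneg | exact: funeneg_ge0].
  by apply/funext => x; apply: eq_integral => y _; rewrite !funenegE.
Qed.

Lemma measurable_tint_cons n (f : n.+1.-tuple R -> R) : measurable_fun setT f ->
  measurable_fun setT (fun x => tint (fun t : n.-tuple R => (f [tuple of x :: t])%:E)).
Proof.
move=> mf; apply: (measurable_tint (F := fun z : R * _ => f [tuple of z.1 :: z.2])).
by apply: (measurableT_comp mf); apply: measurable_cons.
Qed.

Lemma measurable_cons_section n (f : n.+1.-tuple R -> R) (x : R) :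
  measurable_fun setT f -> measurable_fun setT (fun t : n.-tuple R => f [tuple of x :: t]).
Proof. by move=> mf; apply: (measurableT_comp mf); apply: measurable_cons. Qed.

Lemma ge0_tintD n (f g : n.-tuple R -> R) :
  measurable_fun setT f -> measurable_fun setT g ->
  (forall t, 0 <= f t) -> (forall t, 0 <= g t) ->
  tint (fun t => (f t + g t)%:E) = (tint (fun t => (f t)%:E) + tint (fun t => (g t)%:E))%E.
Proof.
elim: n f g => [|n IH] f g mf mg f0 g0 //=.
under eq_integral => x _ do rewrite (IH (fun t => f [tuple of x :: t])
  (fun t => g [tuple of x :: t]) (measurable_cons_section x mf)
  (measurable_cons_section x mg)) //.
apply: ge0_integralD => //; try exact: measurable_tint_cons;
  by move=> x _; apply: tint_ge0 => t; rewrite lee_fin.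
Qed.

Lemma ge0_tintZl n (c : R) (f : n.-tuple R -> R) :
  0 <= c -> measurable_fun setT f -> (forall t, 0 <= f t) ->
  tint (fun t => (c * f t)%:E) = (c%:E * tint (fun t => (f t)%:E))%E.
Proof.
elim: n f => [|n IH] f c0 mf f0 //=.
under eq_integral => x _ do
  rewrite (IH (fun t => f [tuple of x :: t]) c0 (measurable_cons_section x mf)) //.
apply: ge0_integralZl_EFin => //; last exact: measurable_tint_cons.
by move=> x _; apply: tint_ge0 => t; rewrite lee_fin.
Qed.

Lemma ge0_le_tint n (f g : n.-tuple R -> R) :
  measurable_fun setT f -> measurable_fun setT g ->
  (forall t, 0 <= f t) -> (forall t, f t <= g t) ->
  (tint (fun t => (f t)%:E) <= tint (fun t => (g t)%:E))%E.
Proof.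
elim: n f g => [|n IH] f g mf mg f0 fg /=; first by rewrite lee_fin.
apply: ge0_le_integral => //; try exact: measurable_tint_cons.
  by move=> x _; apply: tint_ge0 => t; rewrite lee_fin.
by move=> x _; apply: IH => //; exact: measurable_cons_section.
Qed.

Lemma ge0_integral_oppr (K : R -> \bar R) :
  measurable_fun setT K -> (forall x, 0 <= K x)%E ->
  (\int[mu]_x K (- x)%R = \int[mu]_x K x)%E.
Proof.
move=> mK K0.
have mN : measurable_fun setT (-%R : measurableTypeR R -> measurableTypeR R).
  exact: oppr_measurable.
have := ge0_integral_pushforward mN mu measurableT mK (fun y _ => K0 y).
rewrite preimage_setT => <-.
by apply: eq_measure_integral => A mA _; exact: lebesgue_measureN.
Qed.

Lemma negv_cons n (x : R) (t : n.-tuple R) :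
  negv [tuple of x :: t] = [tuple of - x :: negv t].
Proof. exact: val_inj. Qed.

Lemma negvK n : involutive (@negv R n).
Proof. by move=> x; apply: val_inj; rewrite /= -map_comp map_id_in // => a _ /=; rewrite opprK. Qed.

Lemma measurable_negv n : measurable_fun setT (@negv R n).
Proof.
apply/measurable_fun_tnthP => i.
rewrite (_ : _ \o _ = fun t => - tnth t i); last by apply/funext => t /=; rewrite tnth_map.
by apply: measurableT_comp => //; exact: measurable_tnth.
Qed.

Lemma ge0_tint_negv n (f : n.-tuple R -> R) :
  measurable_fun setT f -> (forall t, 0 <= f t) ->
  tint (fun t => (f (negv t))%:E) = tint (fun t => (f t)%:E).
Proof.
elim: n f => [|n IH] f mf f0; first by rewrite /= (tuple0 (negv _)).
transitivity (\int[mu]_x tint (fun t => (f [tuple of - x :: t])%:E))%E.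
  apply: eq_integral => x _.
  rewrite -(IH (fun t => f [tuple of - x :: t]) (measurable_cons_section _ mf)) //.
  by congr tint; apply/funext => t; rewrite negv_cons.
apply: (ge0_integral_oppr (K := fun x => tint (fun t => (f [tuple of x :: t])%:E))).
  exact: measurable_tint_cons.
by move=> x; apply: tint_ge0 => t; rewrite lee_fin.
Qed.

End iterated_integral.

Section tuple_split.
Variable R : realType.

Lemma size_take_add n m (t : (n + m).-tuple R) : size (take n t) == n.
Proof. by rewrite size_takel // size_tuple leq_addr. Qed.

Lemma size_drop_add n m (t : (n + m).-tuple R) : size (drop n t) == m.
Proof. by rewrite size_drop size_tuple addKn. Qed.

Definition tuple_split n m (t : (n + m).-tuple R) : n.-tuple R * m.-tuple R :=
  (Tuple (size_take_add t), Tuple (size_drop_add t)).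

Lemma tuple_split_cons n m (x : R) (t : (n + m).-tuple R) :
  tuple_split (n := n.+1) [tuple of x :: t] =
  ([tuple of x :: (tuple_split t).1], (tuple_split t).2).
Proof. by congr pair; apply: val_inj. Qed.

Definition negp n m (z : n.-tuple R * m.-tuple R) := (negv z.1, negv z.2).

Lemma negpK n m : involutive (@negp n m).
Proof. by case=> x y; rewrite /negp /= !negvK. Qed.

Lemma measurable_negp n m : measurable_fun setT (@negp n m).
Proof.
by apply: measurable_fun_pair => /=; (apply: measurableT_comp; [exact: measurable_negv|]).
Qed.

Lemma tuple_split_negv n m (t : (n + m).-tuple R) :
  tuple_split (negv t) = negp (tuple_split t).
Proof. by congr pair; apply: val_inj; rewrite /= ?map_take ?map_drop. Qed.

Lemma measurable_tuple_split n m : measurable_fun setT (@tuple_split n m).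
Proof.
apply: measurable_fun_pair; apply/measurable_fun_tnthP => i.
  rewrite (_ : _ \o _ = fun t => tnth t (lshift m i)); first exact: measurable_tnth.
  by apply/funext => t /=; rewrite !(tnth_nth 0) /= nth_take.
rewrite (_ : _ \o _ = fun t => tnth t (rshift n i)); first exact: measurable_tnth.
by apply/funext => t /=; rewrite !(tnth_nth 0) /= nth_drop.
Qed.

Lemma tint_split n m (G : n.-tuple R * m.-tuple R -> \bar R) :
  tint (fun x1 => tint (fun x2 => G (x1, x2))) = tint (fun t => G (tuple_split t)).
Proof.
elim: n G => [|n IH] G /=.
  congr tint; apply/funext => t; congr G.
  by congr pair; [apply/esym/tuple0 | apply: val_inj; rewrite /= drop0].
apply: eq_integral => x _.
rewrite (IH (fun z => G ([tuple of x :: z.1], z.2))).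
by congr tint; apply/funext => t; rewrite tuple_split_cons.
Qed.

End tuple_split.

Section real_iterated_integral.
Variable R : realType.
Local Notation mu := (@lebesgue_measure R).
Implicit Types (n : nat).

Lemma funrposDnegE (T : Type) (f : T -> R) t : `|f t| = f^\+ t + f^\- t.
Proof. by rewrite -[RHS]/((f^\+ + f^\-) t) funrposDneg. Qed.

Lemma funrposBnegE (T : Type) (f : T -> R) t : f t = f^\+ t - f^\- t.
Proof. by rewrite -[RHS]/((f^\+ - f^\-) t) funrposBneg. Qed.

(* [fine] makes [Rtint f] equal to 0 when the integral of [f] is infinite. *)
Definition Rtint n (f : n.-tuple R -> R) : R := fine (tint (fun t => (f t)%:E)).

Definition tintegrable n (f : n.-tuple R -> R) : Prop :=
  measurable_fun setT f /\ (tint (fun t => `|f t|%:E) < +oo)%E.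

Lemma tint_abs n (f : n.-tuple R -> R) : measurable_fun setT f ->
  tint (fun t => `|f t|%:E) =
  (tint (fun t => (f^\+ t)%:E) + tint (fun t => (f^\- t)%:E))%E.
Proof.
move=> mf; rewrite -ge0_tintD; [|exact: measurable_funrpos|exact: measurable_funrneg
  |exact: funrpos_ge0|exact: funrneg_ge0].
by congr tint; apply/funext => t; rewrite funrposDnegE.
Qed.

Lemma tint_funrposBneg n (f : n.-tuple R -> R) : tintegrable f ->
  tint (fun t => (f t)%:E) =
  (tint (fun t => (f^\+ t)%:E) - tint (fun t => (f^\- t)%:E))%E.
Proof.
elim: n f => [|n IH] f [mf fint]; first by rewrite /= -EFinB -funrposBnegE.
have pos_ge0 : (0 <= tint (fun t => (f^\+ t)%:E))%E.
  by apply: tint_ge0 => t; rewrite lee_fin funrpos_ge0.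
have neg_ge0 : (0 <= tint (fun t => (f^\- t)%:E))%E.
  by apply: tint_ge0 => t; rewrite lee_fin funrneg_ge0.
rewrite tint_abs // in fint.
have pos_fin : (tint (fun t => (f^\+ t)%:E) < +oo)%E.
  by apply: le_lt_trans fint; exact: leeDl.
have neg_fin : (tint (fun t => (f^\- t)%:E) < +oo)%E.
  by apply: le_lt_trans fint; exact: leeDr.
move: pos_ge0 neg_ge0 pos_fin neg_fin => /=.
set P := fun x => tint (fun t : n.-tuple R => (f^\+ [tuple of x :: t])%:E).
set N := fun x => tint (fun t : n.-tuple R => (f^\- [tuple of x :: t])%:E).
move=> _ _ P_fin N_fin.
have mP : measurable_fun setT P.
  by apply: measurable_tint_cons; exact: measurable_funrpos.
have mN : measurable_fun setT N.
  by apply: measurable_tint_cons; exact: measurable_funrneg.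
have P_ge0 x : (0 <= P x)%E by apply: tint_ge0 => t; rewrite lee_fin funrpos_ge0.
have N_ge0 x : (0 <= N x)%E by apply: tint_ge0 => t; rewrite lee_fin funrneg_ge0.
have iP : mu.-integrable setT P.
  by apply/integrableP; split => //; under eq_integral do rewrite gee0_abs //.
have iN : mu.-integrable setT N.
  by apply/integrableP; split => //; under eq_integral do rewrite gee0_abs //.
rewrite -integralB //; apply: ae_eq_integral => //.
- exact: measurable_tint_cons.
- exact: emeasurable_funB.
have := integrable_ae measurableT iP; have := integrable_ae measurableT iN.
apply: filterS2 => x Nx Px _.
rewrite (IH (fun t => f [tuple of x :: t])) //; split; first exact: measurable_cons_section.
rewrite (tint_abs (measurable_cons_section x mf)).
by rewrite lte_add_pinfty // ltey_eq ?(Px I) ?(Nx I).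
Qed.

End real_iterated_integral.

Section tintegrable.
Variables (R : realType) (n : nat).
Implicit Types (f g : n.-tuple R -> R).

Lemma tint_Rtint f : tintegrable f -> (forall t, 0 <= f t) ->
  tint (fun t => (f t)%:E) = (Rtint f)%:E.
Proof.
move=> [_ fint] f0; rewrite /Rtint fineK // ge0_fin_numE; last first.
  by apply: tint_ge0 => t; rewrite lee_fin.
by rewrite (_ : (fun t => _) = fun t => `|f t|%:E) //; apply/funext => t; rewrite ger0_norm.
Qed.

Lemma Rtint_ge0 f : (forall t, 0 <= f t) -> 0 <= Rtint f.
Proof. by move=> f0; apply: fine_ge0; apply: tint_ge0 => t; rewrite lee_fin. Qed.

Lemma le_tintegrable f g : measurable_fun setT f ->
  (forall t, `|f t| <= `|g t|) -> tintegrable g -> tintegrable f.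
Proof.
move=> mf fg [mg gint]; split => //; apply: le_lt_trans gint.
by apply: ge0_le_tint => //; exact: measurableT_comp.
Qed.

Lemma tintegrableD f g : tintegrable f -> tintegrable g ->
  tintegrable (fun t => f t + g t).
Proof.
move=> [mf fint] [mg gint]; split; first exact: measurable_funD.
have mfa : measurable_fun setT (fun t => `|f t|) by exact: measurableT_comp.
have mga : measurable_fun setT (fun t => `|g t|) by exact: measurableT_comp.
apply: le_lt_trans (ge0_le_tint (g := fun t => `|f t| + `|g t|) _ _ _ _) _.
- by apply: measurableT_comp => //; exact: measurable_funD.
- exact: measurable_funD.
- by [].
- by move=> t; exact: ler_normD.
- by rewrite ge0_tintD ?lte_add_pinfty.
Qed.

Lemma tintegrableZl c f : tintegrable f -> tintegrable (fun t => c * f t).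
Proof.
move=> [mf fint]; split; first exact: measurable_funM.
under eq_fun do rewrite normrM.
by rewrite ge0_tintZl ?lte_mul_pinfty //; exact: measurableT_comp.
Qed.

Lemma tintegrable_sum (I : Type) (s : seq I) (F : I -> n.-tuple R -> R) :
  (forall i, tintegrable (F i)) -> tintegrable (fun t => \sum_(i <- s) F i t).
Proof.
move=> IF; elim: s => [|i s IHs].
  under eq_fun do rewrite big_nil.
  by split; [exact: measurable_cst | under eq_fun do rewrite normr0; rewrite tint0].
by under eq_fun do rewrite big_cons; exact: tintegrableD.
Qed.

Lemma tintegrable_funrpos f : tintegrable f -> tintegrable f^\+.
Proof.
move=> [mf fint]; apply: le_tintegrable (_ : tintegrable (fun t => `|f t|)).
- exact: measurable_funrpos.
- by move=> t; rewrite normr_id ger0_norm ?funrpos_ge0 // funrposDnegE lerDl funrneg_ge0.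
- by split; [exact: measurableT_comp | under eq_fun do rewrite normr_id].
Qed.

Lemma tintegrable_funrneg f : tintegrable f -> tintegrable f^\-.
Proof.
move=> [mf fint]; apply: le_tintegrable (_ : tintegrable (fun t => `|f t|)).
- exact: measurable_funrneg.
- by move=> t; rewrite normr_id ger0_norm ?funrneg_ge0 // funrposDnegE lerDr funrpos_ge0.
- by split; [exact: measurableT_comp | under eq_fun do rewrite normr_id].
Qed.

Lemma Rtint_funrposBneg f : tintegrable f -> Rtint f = Rtint f^\+ - Rtint f^\-.
Proof.
move=> If; rewrite {1}/Rtint tint_funrposBneg // !tint_Rtint //;
  first [exact: funrpos_ge0 | exact: funrneg_ge0
        | exact: tintegrable_funrpos | exact: tintegrable_funrneg].
Qed.

Lemma ge0_RtintD f g : tintegrable f -> tintegrable g ->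
  (forall t, 0 <= f t) -> (forall t, 0 <= g t) ->
  Rtint (fun t => f t + g t) = Rtint f + Rtint g.
Proof.
move=> If Ig f0 g0; apply: EFin_inj; rewrite EFinD -!tint_Rtint //.
- by rewrite ge0_tintD //; [case: If | case: Ig].
- exact: tintegrableD.
- by move=> t; rewrite addr_ge0.
Qed.

Lemma ge0_RtintZl c f : 0 <= c -> tintegrable f -> (forall t, 0 <= f t) ->
  Rtint (fun t => c * f t) = c * Rtint f.
Proof.
move=> c0 If f0; apply: EFin_inj; rewrite EFinM -!tint_Rtint //.
- by rewrite ge0_tintZl //; case: If.
- exact: tintegrableZl.
- by move=> t; rewrite mulr_ge0.
Qed.

Lemma RtintD f g : tintegrable f -> tintegrable g ->
  Rtint (fun t => f t + g t) = Rtint f + Rtint g.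
Proof.
move=> If Ig; set h := fun t => f t + g t.
have Ih : tintegrable h by exact: tintegrableD.
have [Ihp Ihn] := (tintegrable_funrpos Ih, tintegrable_funrneg Ih).
have [Ifp Ifn] := (tintegrable_funrpos If, tintegrable_funrneg If).
have [Igp Ign] := (tintegrable_funrpos Ig, tintegrable_funrneg Ig).
rewrite (Rtint_funrposBneg Ih) (Rtint_funrposBneg If) (Rtint_funrposBneg Ig).
suff : Rtint h^\+ + Rtint f^\- + Rtint g^\- = Rtint h^\- + Rtint f^\+ + Rtint g^\+ by lra.
rewrite -!ge0_RtintD //; try solve [do 2?apply: tintegrableD => //
  | by move=> t; rewrite ?addr_ge0 ?funrpos_ge0 ?funrneg_ge0].
congr Rtint; apply/funext => t.
by have := funrposBnegE h t; have := funrposBnegE f t; have := funrposBnegE g t; rewrite /h; lra.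
Qed.

Lemma RtintZl c f : tintegrable f -> Rtint (fun t => c * f t) = c * Rtint f.
Proof.
move=> If; have Icf := tintegrableZl c If.
have [Ip In] := (tintegrable_funrpos If, tintegrable_funrneg If).
rewrite (Rtint_funrposBneg Icf) (Rtint_funrposBneg If).
have [c0|/ltW c0] := leP 0 c.
  rewrite ge0_funrposM // ge0_funrnegM // !ge0_RtintZl //;
    try solve [exact: funrpos_ge0 | exact: funrneg_ge0].
  by rewrite mulrBr.
rewrite le0_funrposM // le0_funrnegM // !ge0_RtintZl ?oppr_ge0 //;
  try solve [exact: funrpos_ge0 | exact: funrneg_ge0].
lra.
Qed.

Lemma Rtint_sum (I : Type) (s : seq I) (F : I -> n.-tuple R -> R) :
  (forall i, tintegrable (F i)) ->
  Rtint (fun t => \sum_(i <- s) F i t) = \sum_(i <- s) Rtint (F i).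
Proof.
move=> IF; elim: s => [|i s IHs].
  by under eq_fun do rewrite big_nil; rewrite big_nil /Rtint tint0.
under eq_fun do rewrite big_cons.
by rewrite big_cons RtintD ?IHs //; exact: tintegrable_sum.
Qed.

Lemma le_Rtint f g : tintegrable f -> tintegrable g -> (forall t, f t <= g t) ->
  Rtint f <= Rtint g.
Proof.
move=> If Ig fg; rewrite -subr_ge0.
have -> : Rtint g - Rtint f = Rtint (fun t => g t + (-1) * f t).
  by rewrite RtintD ?RtintZl ?mulN1r //; exact: tintegrableZl.
by apply: Rtint_ge0 => t; rewrite mulN1r subr_ge0.
Qed.

Lemma Rtint_negv f : measurable_fun setT f -> (forall t, 0 <= f t) ->
  Rtint (fun t => f (negv t)) = Rtint f.
Proof. by move=> mf f0; rewrite /Rtint ge0_tint_negv. Qed.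

Lemma tintegrable_negv f : tintegrable f -> tintegrable (fun t => f (negv t)).
Proof.
move=> [mf fint]; split; first by apply: measurableT_comp mf _; exact: measurable_negv.
by rewrite (ge0_tint_negv (f := fun t => `|f t|)) //; exact: measurableT_comp.
Qed.

End tintegrable.
(* If nu < 1, the last two hypotheses force a = 0. *)
Lemma mirror_bound (R : realFieldType) (nu a b s : R) : 0 < nu -> 0 <= a ->
  s <= a + b -> b <= nu * a -> a <= nu * b -> (2 * nu)^-1 * s <= a.
Proof.
move=> nu_gt0 a_ge0 sab ba ab; rewrite ler_pdivrMl ?mulr_gt0 //.
have [nu_ge1|nu_lt1] := leP 1 nu.
  have : 0 <= a * (nu - 1) by rewrite mulr_ge0 // subr_ge0.
  lra.
have a0 : a = 0.
  apply/eqP; rewrite eq_le a_ge0 andbT.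
  have aa : a <= nu * nu * a.
    by apply: le_trans ab _; rewrite -mulrA ler_wpM2l // ltW.
  have nu2_lt1 : nu * nu < 1 by nra.
  nra.
by move: ab ba; rewrite a0 mulr0; lra.
Qed.

Section quadratic_form.
Variables (R : comPzRingType) (m : nat) (v : 'cV[R]_m).
Lemma qform_mx (A : 'M[R]_m) :
  (v^T *m A *m v) 0 0 = \sum_j \sum_k v j 0 * v k 0 * A j k.
Proof.
rewrite mxE exchange_big /=; apply: eq_bigr => k _.
rewrite mxE mulr_suml; apply: eq_bigr => j _.
by rewrite !mxE mulrAC mulrC.
Qed.

Lemma qformD (A B : 'M[R]_m) :
  (v^T *m (A + B) *m v) 0 0 = (v^T *m A *m v) 0 0 + (v^T *m B *m v) 0 0.
Proof. by rewrite mulmxDr mulmxDl [LHS]mxE. Qed.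

Lemma qformB (A B : 'M[R]_m) :
  (v^T *m (A - B) *m v) 0 0 = (v^T *m A *m v) 0 0 - (v^T *m B *m v) 0 0.
Proof. by rewrite mulmxBr mulmxBl [LHS]mxE [X in _ + X]mxE. Qed.

Lemma qformZ (c : R) (A : 'M[R]_m) :
  (v^T *m (c *: A) *m v) 0 0 = c * (v^T *m A *m v) 0 0.
Proof. by rewrite -scalemxAr -scalemxAl [LHS]mxE. Qed.

Lemma sqr_sum_mulr (a : 'I_m -> R) (b : R) :
  (\sum_j a j) ^+ 2 * b = \sum_(jk : 'I_m * 'I_m) a jk.1 * a jk.2 * b.
Proof.
rewrite expr2 mulr_suml mulr_suml.
under eq_bigr do rewrite mulr_sumr mulr_suml.
exact: pair_bigA.
Qed.

End quadratic_form.

Lemma loewner_geD (R : realType) m (A B C D : 'M[R]_m) :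
  loewner_ge A B -> loewner_ge C D -> loewner_ge (A + C) (B + D).
Proof. by move=> AB CD v; rewrite opprD addrACA qformD addr_ge0. Qed.

Section vectors.
Variables (R : realType) (n : nat).
Implicit Types x y : n.-tuple R.

Lemma dotv_negv x y : dotv (negv x) y = - dotv x y.
Proof. by rewrite /dotv -sumrN; apply: eq_bigr => j _; rewrite tnth_map mulNr. Qed.

Lemma tnth_le_normv x j : `|tnth x j| <= normv x.
Proof.
rewrite /normv -sqrtr_sqr; apply: ler_wsqrtr.
rewrite /dotv (bigD1 j) //= -expr2 lerDl.
by apply: sumr_ge0 => i _; rewrite -expr2 sqr_ge0.
Qed.

Lemma measurable_dotv d (T : measurableType d) (f : T -> n.-tuple R) y :
  measurable_fun setT f -> measurable_fun setT (fun a => dotv (f a) y).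
Proof.
move=> mf; apply: measurable_sum => j; apply: measurable_funM => //.
exact: measurableT_comp (measurable_tnth j) mf.
Qed.

Definition argmax_indicator (beta x y : n.-tuple R) : R :=
  if dotv y beta <= dotv x beta then 1 else 0.

Lemma argmax_indicator_negv beta x y :
  argmax_indicator beta (negv x) (negv y) = argmax_indicator beta y x.
Proof. by rewrite /argmax_indicator !dotv_negv lerN2. Qed.

Lemma argmax_indicator_cover beta x y :
  1 <= argmax_indicator beta x y + argmax_indicator beta y x.
Proof.
rewrite /argmax_indicator; case: ifP => [_|/negbT]; first by rewrite lerDl; case: ifP.
by rewrite -ltNge => /ltW ->; rewrite add0r.
Qed.

Lemma argmax_indicator_itv beta x y : 0 <= argmax_indicator beta x y <= 1.
Proof. by rewrite /argmax_indicator; case: ifP; rewrite ?lexx ?ler01. Qed.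

Lemma measurable_argmax_indicator d (T : measurableType d) (f g : T -> n.-tuple R) beta :
  measurable_fun setT f -> measurable_fun setT g ->
  measurable_fun setT (fun a => argmax_indicator beta (f a) (g a)).
Proof.
move=> mf mg; apply: measurable_fun_ifT => //.
by apply: measurable_fun_ler; exact: measurable_dotv.
Qed.

End vectors.

Section expectation.
Variables (R : realType) (d : nat) (p : d.-tuple R * d.-tuple R -> R).
Hypotheses (p_ge0 : forall z, 0 <= p z) (p_meas : measurable_fun setT p)
  (p_fin : (int2 (fun z => (p z)%:E) < +oo)%E).
Local Notation split := (@tuple_split R d d).
Implicit Types (f g : d.-tuple R * d.-tuple R -> R).

Definition Ep_integrable f := tintegrable (fun t => f (split t) * p (split t)).

Lemma Ep_Rtint f : Ep p f = Rtint (fun t => f (split t) * p (split t)).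
Proof. by rewrite /Ep /int2 (tint_split (fun z => (f z * p z)%:E)). Qed.

Lemma measurable_split_density f : measurable_fun setT f ->
  measurable_fun setT (fun t => f (split t) * p (split t)).
Proof.
move=> mf; apply: measurable_funM; apply: measurableT_comp => //;
  exact: measurable_tuple_split.
Qed.

Lemma Ep_integrable_bounded f (C : R) : measurable_fun setT f ->
  (forall z, p z != 0 -> `|f z| <= C) -> Ep_integrable f.
Proof.
move=> mf f_bd; apply: le_tintegrable (_ : tintegrable (fun t => C * p (split t))).
- exact: measurable_split_density.
- move=> t; have [->|pz] := eqVneq (p (split t)) 0; first by rewrite mulr0 normr0.
  by rewrite !normrM ler_wpM2r // (le_trans (f_bd _ pz)) // ler_norm.
- apply: tintegrableZl; split.
    by apply: measurableT_comp => //; exact: measurable_tuple_split.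
  under eq_fun do rewrite ger0_norm //.
  by rewrite -(tint_split (fun z => (p z)%:E)).
Qed.

Lemma Ep_ge0 f : (forall z, 0 <= f z) -> 0 <= Ep p f.
Proof. by move=> f0; rewrite Ep_Rtint; apply: Rtint_ge0 => t; rewrite mulr_ge0. Qed.

Lemma Ep_integrableD f g : Ep_integrable f -> Ep_integrable g ->
  Ep_integrable (fun z => f z + g z).
Proof.
move=> If Ig; rewrite /Ep_integrable; under eq_fun do rewrite mulrDl.
exact: tintegrableD.
Qed.

Lemma EpD f g : Ep_integrable f -> Ep_integrable g ->
  Ep p (fun z => f z + g z) = Ep p f + Ep p g.
Proof.
move=> If Ig; rewrite !Ep_Rtint -RtintD //.
by congr Rtint; apply/funext => t; rewrite mulrDl.
Qed.

Lemma Ep_integrable_sum (I : Type) (s : seq I) (a : I -> R)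
    (F : I -> d.-tuple R * d.-tuple R -> R) :
  (forall i, Ep_integrable (F i)) -> Ep_integrable (fun z => \sum_(i <- s) a i * F i z).
Proof.
move=> IF; rewrite /Ep_integrable.
under eq_fun do rewrite mulr_suml.
apply: tintegrable_sum => i; under eq_fun do rewrite -mulrA.
exact: tintegrableZl (IF i).
Qed.

Lemma Ep_sum (I : Type) (s : seq I) (a : I -> R)
    (F : I -> d.-tuple R * d.-tuple R -> R) :
  (forall i, Ep_integrable (F i)) ->
  Ep p (fun z => \sum_(i <- s) a i * F i z) = \sum_(i <- s) a i * Ep p (F i).
Proof.
move=> IF; rewrite Ep_Rtint.
under eq_fun do rewrite mulr_suml.
rewrite Rtint_sum => [|i]; last by under eq_fun do rewrite -mulrA; exact: tintegrableZl (IF i).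
apply: eq_bigr => i _; rewrite Ep_Rtint -RtintZl; last exact: IF.
by congr Rtint; apply/funext => t; rewrite mulrA.
Qed.

Lemma ge0_le_Ep f g : measurable_fun setT f -> (forall z, 0 <= f z) ->
  (forall z, f z <= g z) -> Ep_integrable g -> Ep p f <= Ep p g.
Proof.
move=> mf f0 fg Ig; have If : Ep_integrable f.
  apply: le_tintegrable Ig; first exact: measurable_split_density.
  move=> t; have g0 : 0 <= g (split t) := le_trans (f0 _) (fg _).
  by rewrite !normrM ler_wpM2r // !ger0_norm.
by rewrite !Ep_Rtint; apply: le_Rtint => // t; rewrite ler_wpM2r.
Qed.

Definition moment m (f : d.-tuple R * d.-tuple R -> m.-tuple R)
    (c : d.-tuple R * d.-tuple R -> R) : 'M[R]_m :=
  \matrix_(j, k) Ep p (fun z => tnth (f z) j * tnth (f z) k * c z).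

Section moment.
Variables (m : nat) (f : d.-tuple R * d.-tuple R -> m.-tuple R).
Variable c : d.-tuple R * d.-tuple R -> R.

Lemma Ep_integrable_moment (C : R) : measurable_fun setT f ->
  (forall z, p z != 0 -> normv (f z) <= C) ->
  measurable_fun setT c -> (forall z, `|c z| <= 1) ->
  forall j k, Ep_integrable (fun z => tnth (f z) j * tnth (f z) k * c z).
Proof.
move=> mf f_bd mc c_bd j k; apply: (Ep_integrable_bounded (C := C * C)).
  have mfj i : measurable_fun setT (fun z => tnth (f z) i).
    exact: measurableT_comp (measurable_tnth i) mf.
  by apply: measurable_funM => //; exact: measurable_funM.
have tnth_bd z i : p z != 0 -> `|tnth (f z) i| <= C.
  by move=> pz; apply: le_trans (f_bd _ pz); exact: tnth_le_normv.
move=> z pz; rewrite !normrM -[C * C]mulr1.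
by apply: ler_pM; rewrite ?mulr_ge0 // ler_pM // tnth_bd.
Qed.

Hypothesis f_int : forall j k, Ep_integrable (fun z => tnth (f z) j * tnth (f z) k * c z).

Lemma Ep_integrable_qform (v : 'cV[R]_m) :
  Ep_integrable (fun z => (\sum_j v j 0 * tnth (f z) j) ^+ 2 * c z).
Proof.
have -> : (fun z => (\sum_j v j 0 * tnth (f z) j) ^+ 2 * c z) = (fun z =>
    \sum_(jk : 'I_m * 'I_m) v jk.1 0 * v jk.2 0 * (tnth (f z) jk.1 * tnth (f z) jk.2 * c z)).
  by apply/funext => z; rewrite sqr_sum_mulr; apply: eq_bigr => -[j k] _ /=; ring.
by apply: Ep_integrable_sum => -[j k]; exact: f_int.
Qed.

Lemma qform_moment (v : 'cV[R]_m) : (v^T *m moment f c *m v) 0 0 =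
  Ep p (fun z => (\sum_j v j 0 * tnth (f z) j) ^+ 2 * c z).
Proof.
rewrite qform_mx pair_bigA /=.
under eq_bigr do rewrite mxE.
rewrite -(@Ep_sum _ _ _ (fun jk z => tnth (f z) jk.1 * tnth (f z) jk.2 * c z)); last by case.
congr Ep; apply/funext => z.
by rewrite sqr_sum_mulr; apply: eq_bigr => -[j k] _ /=; ring.
Qed.

End moment.

End expectation.

Section reflection.
Variables (R : realType) (d : nat) (p : d.-tuple R * d.-tuple R -> R) (nu : R).
Hypotheses (p_ge0 : forall z, 0 <= p z) (p_meas : measurable_fun setT p)
  (p_fin : (int2 (fun z => (p z)%:E) < +oo)%E) (nu_gt0 : 0 < nu)
  (p_sym : forall z, p (negp z) <= nu * p z).
Local Notation split := (@tuple_split R d d).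
Implicit Types (f g c : d.-tuple R * d.-tuple R -> R).

(* The integrand of [Ep p (f \o negp)] after the substitution [t := negv t]. *)
Let reflected f t := f (split t) * p (negp (split t)).

Let reflectedE f :
  (fun t => reflected f (negv t)) = (fun t => f (negp (split t)) * p (split t)).
Proof. by apply/funext => t; rewrite /reflected tuple_split_negv negpK. Qed.

Let measurable_reflected f : measurable_fun setT f -> measurable_fun setT (reflected f).
Proof.
move=> mf; have ms := @measurable_tuple_split R d d.
apply: measurable_funM; first exact: measurableT_comp mf ms.
by apply: measurableT_comp p_meas _; apply: measurableT_comp ms; exact: measurable_negp.
Qed.

Let reflected_le f t :
  (forall z, 0 <= f z) -> reflected f t <= nu * (f (split t) * p (split t)).
Proof. by move=> f0; rewrite /reflected mulrCA ler_wpM2l. Qed.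

Let tintegrable_reflected f : measurable_fun setT f -> Ep_integrable p f ->
  tintegrable (reflected f).
Proof.
move=> mf If; apply: le_tintegrable (tintegrableZl nu If).
  exact: measurable_reflected.
move=> t; rewrite /reflected !normrM (ger0_norm (p_ge0 _)) (ger0_norm (ltW nu_gt0)).
by rewrite (ger0_norm (p_ge0 _)) mulrCA ler_wpM2l.
Qed.

Lemma Ep_integrable_negp f : measurable_fun setT f -> Ep_integrable p f ->
  Ep_integrable p (fun z => f (negp z)).
Proof.
move=> mf If; rewrite /Ep_integrable -reflectedE.
exact: tintegrable_negv (tintegrable_reflected mf If).
Qed.

Lemma Ep_negp_le f : measurable_fun setT f -> (forall z, 0 <= f z) ->
  Ep_integrable p f -> Ep p (fun z => f (negp z)) <= nu * Ep p f.
Proof.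
move=> mf f0 If; rewrite !Ep_Rtint -reflectedE Rtint_negv; last 2 first.
- exact: measurable_reflected.
- by move=> t; rewrite /reflected mulr_ge0.
rewrite -RtintZl //; apply: le_Rtint => //; first exact: tintegrable_reflected.
  exact: tintegrableZl.
by move=> t; exact: reflected_le.
Qed.

Lemma Ep_cone_ge g c : measurable_fun setT g -> measurable_fun setT c ->
  (forall z, 0 <= g z) -> (forall z, g (negp z) = g z) ->
  (forall z, 0 <= c z) -> (forall z, 1 <= c z + c (negp z)) ->
  Ep_integrable p (fun z => g z * c z) ->
  (2 * nu)^-1 * Ep p g <= Ep p (fun z => g z * c z).
Proof.
move=> mg mc g0 g_even c0 c_cover Igc; set gc := fun z => g z * c z.
have mgc : measurable_fun setT gc by exact: measurable_funM.
have gc0 z : 0 <= gc z by rewrite mulr_ge0.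
have Igc_negp : Ep_integrable p (fun z => gc (negp z)) by exact: Ep_integrable_negp.
apply: (mirror_bound (b := Ep p (fun z => gc (negp z)))) => //.
- exact: Ep_ge0.
- rewrite -EpD //; apply: ge0_le_Ep => //; last exact: Ep_integrableD.
  by move=> z; rewrite /gc g_even -mulrDr -{1}[g z]mulr1 ler_wpM2l.
- exact: Ep_negp_le.
- rewrite [X in X <= _](_ : _ = Ep p (fun z => (fun z => gc (negp z)) (negp z))); last first.
    by congr Ep; apply/funext => z /=; rewrite negpK.
  apply: Ep_negp_le => //.
  by apply: measurableT_comp mgc _; exact: measurable_negp.
Qed.

Lemma loewner_moment_cone m (f : d.-tuple R * d.-tuple R -> m.-tuple R) c (C : R) :
  measurable_fun setT f -> (forall z, p z != 0 -> normv (f z) <= C) ->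
  (forall z, f (negp z) = negv (f z)) ->
  measurable_fun setT c -> (forall z, 0 <= c z <= 1) -> (forall z, 1 <= c z + c (negp z)) ->
  loewner_ge (moment p f c) ((2 * nu)^-1 *: moment p f (fun _ => 1)).
Proof.
move=> mf f_bd f_odd mc c01 c_cover v.
have c_bd z : `|c z| <= 1 by have /andP[c0 c1] := c01 z; rewrite ger0_norm.
have Ic := Ep_integrable_moment p_ge0 p_meas p_fin mf f_bd mc c_bd.
have one_bd (z : d.-tuple R * d.-tuple R) : `|1 : R| <= 1 by rewrite normr1.
have I1 := Ep_integrable_moment p_ge0 p_meas p_fin mf f_bd (measurable_cst _) one_bd.
rewrite qformB qformZ !qform_moment // subr_ge0.
rewrite (_ : Ep p _ = Ep p (fun z => (\sum_j v j 0 * tnth (f z) j) ^+ 2)); last first.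
  by congr Ep; apply/funext => z; rewrite mulr1.
apply: Ep_cone_ge => //.
- apply: measurable_funX; apply: measurable_sum => j; apply: measurable_funM => //.
  exact: measurableT_comp (measurable_tnth j) mf.
- by move=> z; exact: sqr_ge0.
- move=> z; rewrite f_odd -[RHS]sqrrN -sumrN.
  by congr (_ ^+ 2); apply: eq_bigr => j _; rewrite tnth_map mulrN.
- by move=> z; have /andP[] := c01 z.
- exact: Ep_integrable_qform.
Qed.

End reflection.

Unset Implicit Arguments.

Theorem lemma2 (R : realType) (d : nat) (xmax nu : R)
  (p : d.-tuple R * d.-tuple R -> R)
  (p_ge0 : forall z, 0 <= p z)
  (p_meas : measurable_fun setT p)
  (p_int1 : int2 (fun z => (p z)%:E) = 1%E)
  (p_bounded : forall z, p z != 0 -> normv z.1 <= xmax /\ normv z.2 <= xmax)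
  (nu_gt0 : 0 < nu)
  (p_sym : forall z, p (negv z.1, negv z.2) <= nu * p z)
  (beta : d.-tuple R) :
  let Sigma : 'M[R]_d := \matrix_(j, k)
      (2^-1 * Ep p (fun z => tnth z.1 j * tnth z.1 k + tnth z.2 j * tnth z.2 k)) in
  let M : 'M[R]_d := \matrix_(j, k)
      (Ep p (fun z => tnth z.1 j * tnth z.1 k
                      * (if dotv z.2 beta <= dotv z.1 beta then 1 else 0))
     + Ep p (fun z => tnth z.2 j * tnth z.2 k
                      * (if dotv z.1 beta <= dotv z.2 beta then 1 else 0))) in
  loewner_ge M (nu^-1 *: Sigma).
Proof.
move=> Sigma M.
have p_fin : (int2 (fun z => (p z)%:E) < +oo)%E by rewrite p_int1 ltry.
have [bd1 bd2] : (forall z, p z != 0 -> normv z.1 <= xmax) /\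
                 (forall z, p z != 0 -> normv z.2 <= xmax).
  by split=> z /p_bounded[].
have eS : nu^-1 *: Sigma = (2 * nu)^-1 *: moment p fst (fun _ => 1)
                         + (2 * nu)^-1 *: moment p snd (fun _ => 1).
  apply/matrixP => j k; rewrite !mxE -mulrDr -EpD; last 2 first.
  - by apply: (Ep_integrable_moment p_ge0 p_meas p_fin (f := fst) _ bd1) => // z; rewrite normr1.
  - by apply: (Ep_integrable_moment p_ge0 p_meas p_fin (f := snd) _ bd2) => // z; rewrite normr1.
  rewrite mulrA [nu^-1 * _]mulrC -invfM.
  by congr (_ * Ep p _); apply/funext => z; rewrite !mulr1.
have -> : M = moment p fst (fun z => argmax_indicator beta z.1 z.2)
            + moment p snd (fun z => argmax_indicator beta z.2 z.1).
  by apply/matrixP => j k; rewrite !mxE.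
rewrite eS; apply: loewner_geD; apply: (loewner_moment_cone p_ge0 p_meas p_fin nu_gt0 p_sym)
  => //; try exact: bd1; try exact: bd2;
  first [ exact: measurable_argmax_indicator
        | by move=> z; exact: argmax_indicator_itv
        | by move=> z; rewrite /negp /= argmax_indicator_negv argmax_indicator_cover ].
Qed.
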